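(* Let $M$ be an $\widehat{\mathrm{FI}}$-module with generation degree $\le a$. Then $\Sigma^{a+2}M$ is an $\mathrm{FI}$-module.
   Context: $\widehat{\mathrm S}_n=\{(\sigma,d)\in\mathrm S_n\times\mathbb Z: d\text{ odd}\iff\operatorname{sgn}\sigma=-1\}$ ($n\ge2$; trivial for $n=0,1$). $\widehat{\mathrm{FI}}$: objects $n\in\mathbb N$, $\widehat{\mathrm{FI}}(n,m)=\widehat{\mathrm S}_m/i_2(\widehat{\mathrm S}_{m-n})$ ($i_1,i_2$ inclusions on first/last letters), composition $([s],[t])\mapsto[t\,i_1(s)]$; it carries a monoidal structure with $n\oplus m=n+m$, defined on morphisms via $i_1,i_2$ and a braiding coming from $\mathrm{Br}_n\to\widehat{\mathrm S}_n$, $\sigma_{i,i+1}\mapsto((i\ i{+}1),1)$; on automorphisms, $-\oplus 1$ is $i_1:\widehat{\mathrm S}_n\to\widehat{\mathrm S}_{n+1}$. $\Sigma M$ is the restriction of $M$ along $-\oplus1$, so $(\Sigma M)_n=M_{n+1}$. Generation degree $\le a$: $M$ is a quotient of $\mathbf I(W)$, $\mathbf I(W)_m=\bigoplus_{n\le m}\mathbb Z[\widehat{\mathrm{FI}}(n,m)]\otimes_{\mathbb Z\widehat{\mathrm S}_n}W_n$, with $W_n=0$ for $n>a$. An $\widehat{\mathrm{FI}}$-module is an $\mathrm{FI}$-module if it factors through $\widehat{\mathrm{FI}}\to\mathrm{FI}$ (induced by $\widehat{\mathrm S}_m\to\mathrm S_m$). *)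

From HB Require Import structures.
From mathcomp Require Import all_boot all_order all_algebra all_fingroup.
Set Implicit Arguments. Unset Strict Implicit. Unset Printing Implicit Defensive.
Import GRing.Theory.
Local Open Scope ring_scope.

(* Convention: permutations are composed as functions, i.e.            *)
(* hmul p q acts by x |-> p.1 (q.1 x) ; d components add.               *)

Definition hat (m : nat) := ('S_m * int)%type.

Definition inHat (m : nat) (p : hat m) : bool :=
  if (1 < m)%N then odd_perm p.1 == odd `|p.2|%N else p.2 == 0.

Definition hone (m : nat) : hat m := (1%g, 0).

Definition hmul (m : nat) (p q : hat m) : hat m := ((q.1 * p.1)%g, p.2 + q.2).

Definition mkperm (k : nat) (f : 'I_k -> 'I_k) : 'S_k :=
  match @idP (injectiveb f) with
  | ReflectT H => perm (elimT (injectiveP f) H)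
  | ReflectF _ => 1%g
  end.

Definition fun_ord (k : nat) (g : nat -> nat) : 'I_k -> 'I_k :=
  fun x => insubd x (g x).

Definition pnat (m : nat) (s : 'S_m) : nat -> nat :=
  fun x => if (insub x : option 'I_m) is Some i then val (s i) else x.

Definition ext_perm (m k : nat) (s : 'S_m) : 'S_k := mkperm (@fun_ord k (pnat s)).
Arguments ext_perm : clear implicits.
Definition i1 (m k : nat) (s : hat m) : hat k := (ext_perm m k s.1, s.2).
Arguments i1 : clear implicits.

Definition shift_perm (n m : nat) (u : 'S_(m - n)) : 'S_m :=
  mkperm (@fun_ord m (fun x => if (x < n)%N then x else (n + pnat u (x - n))%N)).
Arguments shift_perm : clear implicits.
Definition i2 (n m : nat) (u : hat (m - n)) : hat m := (shift_perm n m u.1, u.2).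
Arguments i2 : clear implicits.

(* \hat{FI}-modules.  A morphism n -> m (n <= m) of \hat{FI} is a coset *)
(* [s] = s i_2(\hat S_(m-n)), s in \hat S_m; a module is given on      *)
(* representatives and required to be well defined on cosets.          *)

Record FIhatData := {
  Mob : nat -> zmodType;
  Mmap : forall n m : nat, hat m -> {additive Mob n -> Mob m}
}.
Arguments Mmap : clear implicits.


Definition isFIhatModule (M : FIhatData) : Prop :=
  (forall (n m : nat) (s : hat m) (u : hat (m - n)),
      (n <= m)%N -> inHat s -> inHat u ->
      forall x, Mmap M n m (hmul s (i2 n m u)) x = Mmap M n m s x) /\
  (forall (n : nat) x, Mmap M n n (hone n) x = x) /\
  (forall (n m k : nat) (s : hat m) (t : hat k),
      (n <= m)%N -> (m <= k)%N -> inHat s -> inHat t ->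
      forall x, Mmap M m k t (Mmap M n m s x) = Mmap M n k (hmul t (i1 m k s)) x).

(* FI-modules: the functor factors through \hat{FI} -> FI, i.e. M([s])
   only depends on the injection [n] -> [m] obtained by restricting the
   permutation of s to the first n letters. *)
Definition factorsThroughFI (M : FIhatData) : Prop :=
  forall (n m : nat) (s t : hat m), (n <= m)%N -> inHat s -> inHat t ->
    (forall i : 'I_m, (i < n)%N -> s.1 i = t.1 i) ->
    forall x, Mmap M n m s x = Mmap M n m t x.

Definition isFImodule (M : FIhatData) : Prop :=
  isFIhatModule M /\ factorsThroughFI M.

(* The functor - (+) 1 on morphisms: [s] (+) id_1 = [i_1(s) (id_n (+) b)]*)
(* where b : 1 (+) (m-n) -> (m-n) (+) 1 is the braiding, whose image in  *)
(* \hat S_(m+1) is (cycle sending letter n to m, shifting n+1..m down,   *)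
(* m - n), the image of a product of m - n positive generators.          *)

Definition beta_perm (n m : nat) : 'S_(m.+1) :=
  mkperm (@fun_ord m.+1
    (fun x => if (x < n)%N then x else if x == n then m else x.-1)).

Definition beta (n m : nat) : hat m.+1 := (beta_perm n m, (m - n)%:Z).

Definition plus1 (n m : nat) (s : hat m) : hat m.+1 :=
  hmul (i1 m m.+1 s) (beta n m).
Arguments plus1 : clear implicits.

Definition Sigma (M : FIhatData) : FIhatData :=
  {| Mob := fun n => Mob M n.+1;
     Mmap := fun n m s => Mmap M n.+1 m.+1 (plus1 n m s) |}.

(* Generation degree <= a: M is a quotient of I(W) with W_n = 0 for n>a.*)
(* A map I(W) -> M is given (induction adjunction) by \hat S_n-         *)
(* equivariant maps phi_n : W_n -> M_n; it is surjective iff every      *)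
(* element of M_m is a finite sum of M([s])(phi_n(w)), n <= m, since     *)
(* I(W)_m is generated by the elementary tensors [s] (x) w.             *)

Definition genDegLe (M : FIhatData) (a : nat) : Prop :=
  exists (W : nat -> zmodType)
         (act : forall n : nat, hat n -> {additive W n -> W n})
         (phi : forall n : nat, {additive W n -> Mob M n}),
    (forall n : nat, (a < n)%N -> forall w : W n, w = 0) /\
    (forall (n : nat) (w : W n), act n (hone n) w = w) /\
    (forall (n : nat) (g h : hat n), inHat g -> inHat h ->
        forall w : W n, act n (hmul g h) w = act n g (act n h w)) /\
    (forall (n : nat) (g : hat n), inHat g ->
        forall w : W n, phi n (act n g w) = Mmap M n n g (phi n w)) /\
    (forall (m : nat) (x : Mob M m),
        exists l : seq {n : nat & (hat m * W n)%type},
          all (fun p => (projT1 p <= m)%N && inHat (projT2 p).1) l /\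
          x = \sum_(p <- l) Mmap M (projT1 p) m (projT2 p).1
                                 (phi (projT1 p) (projT2 p).2)).

From mathcomp Require Import zify.
From mathcomp Require Import all_boot all_order all_algebra all_fingroup.
(* Imported last so that [pnat] refers to Defs.pnat, not to prime.pnat. *)
From Pilot Require Import Defs.
Set Implicit Arguments. Unset Strict Implicit. Unset Printing Implicit Defensive.
Import GRing.Theory.

(** The kernel of \hat S_N -> S_N consists of the central elements (1, 2j).
    If M is generated in degree <= a, every element of M_N (N >= a + 2) is a
    sum of images M([s])(w) of generators w in degree n <= a, and
    (1, 2j) [s] = [s i_2(1, 2j)] = [s] because (1, 2j) lies in \hat S_(N-n)
    with N - n >= 2; so the kernel acts trivially on M_N for N >= a + 2.
    The functor - (+) 1 sends (1, 2j) to (1, 2j), hence each application of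
    Sigma lowers this threshold by one, and the kernel acts trivially on all
    of Sigma^(a+2) M.  Finally, in a module on which the kernel acts trivially,
    if s and t induce the same injection [n] -> [m], then
    t = (1, 2j) s i_2(u) for some u in \hat S_(m-n), so M([s]) = M([t]). *)

Ltac case_ifs := repeat first
  [ match goal with H : context [if _ then _ else _] |- _ => move: H end
  | match goal with |- context [if ?b then _ else _] => case: (@idP b) => ? end ];
  intros.

Lemma pnatE m (s : 'S_m) (i : 'I_m) : pnat s (val i) = val (s i).
Proof. by rewrite /pnat valK. Qed.

Lemma pnat_out m (s : 'S_m) x : (m <= x)%N -> pnat s x = x.
Proof. by move=> mx; rewrite /pnat insubF //; apply/negbTE; rewrite -leqNgt. Qed.

Lemma pnat_lt m (s : 'S_m) x : (x < m)%N -> (pnat s x < m)%N.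
Proof. by move=> xm; rewrite /pnat insubT /=. Qed.

Ltac generalize_pnat :=
  repeat match goal with H : context [pnat _ _] |- _ => move: H end;
  repeat match goal with |- context [@pnat ?m ?s ?y] =>
    move: (@pnat_lt m s y) (@pnat_out m s y); generalize (@pnat m s y) => ? end.

Lemma pnat_inj m (s : 'S_m) : injective (pnat s).
Proof.
move=> x y; case: (ltnP x m) => xm; case: (ltnP y m) => ym.
- rewrite -[x]/(val (Ordinal xm)) -[y]/(val (Ordinal ym)) !pnatE.
  by move/val_inj/perm_inj => [].
- by rewrite (pnat_out s ym); have := pnat_lt s xm; lia.
- by rewrite (pnat_out s xm); have := pnat_lt s ym; lia.
- by rewrite (pnat_out s xm) (pnat_out s ym).
Qed.

Lemma pnat1 m x : pnat (1 : 'S_m) x = x.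
Proof.
case: (ltnP x m) => xm; last exact: pnat_out.
by rewrite -[x]/(val (Ordinal xm)) pnatE perm1.
Qed.

Lemma pnatM m (p q : 'S_m) x : pnat (p * q) x = pnat q (pnat p x).
Proof.
case: (ltnP x m) => xm; last by rewrite !pnat_out.
by rewrite -[x]/(val (Ordinal xm)) !pnatE permM.
Qed.

Lemma eq_perm_pnat m (p q : 'S_m) :
  (forall x, (x < m)%N -> pnat p x = pnat q x) -> p = q.
Proof.
move=> pq; apply/permP => x; apply: val_inj; rewrite -!pnatE; exact: pq (ltn_ord x).
Qed.

Lemma pnat_mkperm k (g : nat -> nat) :
  (forall x, (x < k)%N -> (g x < k)%N) ->
  (forall x y, (x < k)%N -> (y < k)%N -> g x = g y -> x = y) ->
  forall x, pnat (mkperm (@fun_ord k g)) x = if (x < k)%N then g x else x.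
Proof.
move=> g_lt g_inj x; case: ifP => xk; last by rewrite pnat_out // leqNgt xk.
have fun_ordE (y : 'I_k) : val (@fun_ord k g y) = g y.
  by rewrite /fun_ord val_insubd g_lt.
have fun_ord_inj : injective (@fun_ord k g).
  by move=> y z /(congr1 val); rewrite !fun_ordE => /g_inj e; apply/val_inj/e.
rewrite -[x]/(val (Ordinal xk)) pnatE /mkperm.
destruct (@idP (injectiveb (@fun_ord k g))) as [inj_g | not_inj].
- by rewrite permE fun_ordE.
- by case: not_inj; apply/injectiveP.
Qed.

Lemma pnat_ext_perm m k (s : 'S_m) x :
  (m <= k)%N -> pnat (ext_perm m k s) x = pnat s x.
Proof.
move=> mk; rewrite pnat_mkperm.
- by case: ltnP => // kx; rewrite pnat_out //; lia.
- by move=> y yk; case: (ltnP y m) => ym; [have := pnat_lt s ym | rewrite pnat_out]; lia.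
- by move=> y z _ _ /pnat_inj.
Qed.

Lemma pnat_shift_perm n m (u : 'S_(m - n)) x : (n <= m)%N ->
  pnat (shift_perm n m u) x =
  if (x < n)%N then x else if (x < m)%N then (n + pnat u (x - n))%N else x.
Proof.
move=> nm; rewrite pnat_mkperm => [| y ym | y z ym zm] /=.
- by case_ifs; lia.
- case: (ltnP y n) => ny //=.
  by have := @pnat_lt _ u (y - n); lia.
- case: (ltnP y n) => ny; case: (ltnP z n) => nz /=; try lia.
  by move=> e; have := @pnat_inj _ u (y - n) (z - n); lia.
Qed.

Lemma pnat_beta_perm n m x : (n <= m)%N ->
  pnat (beta_perm n m) x =
  if (x < n)%N then x else if x == n then m else if (x <= m)%N then x.-1 else x.
Proof.
move=> nm; rewrite pnat_mkperm => [| y | y z]; by case_ifs; lia.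
Qed.

Lemma pnat_tperm k (a b : 'I_k) x : (x < k)%N ->
  pnat (tperm a b) x = if x == val a then val b else if x == val b then val a else x.
Proof.
move=> xk; rewrite -[x]/(val (Ordinal xk)) pnatE.
case: tpermP => [->|->|xa xb]; rewrite ?eqxx //=.
- by case: eqVneq => // ->.
- move/eqP: xa; move/eqP: xb; rewrite -!(inj_eq val_inj) /=.
  by move=> /negbTE -> /negbTE ->.
Qed.

Lemma ext_perm_id m (s : 'S_m) : ext_perm m m s = s.
Proof. by apply: eq_perm_pnat => x _; rewrite pnat_ext_perm. Qed.

Lemma ext_perm1 m k : (m <= k)%N -> ext_perm m k 1 = 1%g.
Proof. by move=> mk; apply: eq_perm_pnat => x _; rewrite pnat_ext_perm // !pnat1. Qed.

Lemma shift_perm1 n m : (n <= m)%N -> shift_perm n m 1 = 1%g.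
Proof.
by move=> nm; apply: eq_perm_pnat => x xm; rewrite pnat_shift_perm // !pnat1; case_ifs; lia.
Qed.

Lemma beta_perm1 n : beta_perm n n = 1%g.
Proof. by apply: eq_perm_pnat => x _; rewrite pnat_beta_perm // pnat1; case_ifs; lia. Qed.

Lemma perm_le1 k (s : 'S_k) : (k <= 1)%N -> s = 1%g.
Proof.
by move=> k1; apply: eq_perm_pnat => x xk; rewrite pnat1; have := pnat_lt s xk; lia.
Qed.

Lemma shift_perm_of_fixed_prefix n m (r : 'S_m) : (n <= m)%N ->
  (forall i : 'I_m, (i < n)%N -> r i = i) ->
  exists u : 'S_(m - n), shift_perm n m u = r.
Proof.
move=> nm r_fix.
have r_fixN i : (i < n)%N -> pnat r i = i.
  move=> i_n; have i_m : (i < m)%N by lia.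
  by rewrite -[i]/(val (Ordinal i_m)) pnatE r_fix.
have r_ge i : (n <= i)%N -> (n <= pnat r i)%N.
  move=> n_i; case: (ltnP (pnat r i) n) => // lt_n.
  by have := @pnat_inj _ r _ _ (r_fixN _ lt_n); lia.
pose g y := (pnat r (n + y) - n)%N.
have g_lt y : (y < m - n)%N -> (g y < m - n)%N.
  by move=> y_lt; have := @pnat_lt _ r (n + y); have := r_ge (n + y); rewrite /g; lia.
have g_inj y z : (y < m - n)%N -> (z < m - n)%N -> g y = g z -> y = z.
  move=> _ _; rewrite /g => e.
  have : pnat r (n + y) = pnat r (n + z).
    by have := r_ge (n + y); have := r_ge (n + z); lia.
  by move/pnat_inj; lia.
exists (mkperm (@fun_ord (m - n) g)); apply: eq_perm_pnat => x xm.
rewrite pnat_shift_perm // pnat_mkperm // xm /g.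
case: (ltnP x n) => [x_n | n_x] /=; first by rewrite r_fixN.
by rewrite ifT ?subnKC ?r_ge //; lia.
Qed.

Section TransportAlongInjection.
Variables (k m : nat) (f : 'I_k -> 'I_m).
Hypothesis f_inj : injective f.

Definition transports (s : 'S_k) (p : 'S_m) :=
  (forall y, p (f y) = f (s y)) /\ (forall x, x \notin codom f -> p x = x).

Lemma transports1 : transports 1 1.
Proof. by split=> [y|x _]; rewrite !perm1. Qed.

Lemma transportsM s s' p p' :
  transports s p -> transports s' p' -> transports (s * s') (p * p').
Proof.
move=> [sp_f sp_out] [sp'_f sp'_out]; split=> [y|x x_out]; rewrite !permM.
- by rewrite sp_f sp'_f.
- by rewrite sp_out // sp'_out.
Qed.

Lemma transports_tperm a b : transports (tperm a b) (tperm (f a) (f b)).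
Proof.
split=> [y|x x_out].
- case: (tpermP a b y) => [->|->|ya yb]; rewrite ?tpermL ?tpermR //.
  by apply: tpermD; rewrite (inj_eq f_inj) eq_sym; apply/eqP.
- by apply: tpermD; apply: contraNneq x_out => <-; apply: codom_f.
Qed.

Lemma transports_uniq s p p' : transports s p -> transports s p' -> p = p'.
Proof.
move=> [sp_f sp_out] [sp'_f sp'_out]; apply/permP => x.
case: (boolP (x \in codom f)) => [/codomP [y ->] | x_out]; first by rewrite sp_f sp'_f.
by rewrite sp_out ?sp'_out.
Qed.

Lemma odd_perm_transports s p : transports s p -> odd_perm p = odd_perm s.
Proof.
case: (prod_tpermP s) => ts -> _; elim: ts p => [|t ts IH] p.
  by rewrite big_nil => sp; rewrite (transports_uniq sp transports1) !odd_perm1.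
rewrite big_cons => sp.
have := transportsM (transports_tperm t.1 t.2) sp.
rewrite mulgA tperm2 mul1g => /IH.
by rewrite !odd_permM !odd_tperm (inj_eq f_inj) => <-; rewrite addKb.
Qed.

End TransportAlongInjection.

Lemma odd_ext_perm m k (s : 'S_m) (mk : (m <= k)%N) :
  odd_perm (ext_perm m k s) = odd_perm s.
Proof.
apply: (@odd_perm_transports _ _ (widen_ord mk)); first by move=> y z /(congr1 val) /= /val_inj.
split=> [y|x x_out]; apply: val_inj; rewrite /= -!pnatE pnat_ext_perm //=.
case: (ltnP x m) => xm; last exact: pnat_out.
by case/codomP: x_out; exists (Ordinal xm); apply: val_inj.
Qed.

Lemma odd_shift_perm n m (u : 'S_(m - n)) (nm : (n <= m)%N) :
  odd_perm (shift_perm n m u) = odd_perm u.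
Proof.
have shift_lt (y : 'I_(m - n)) : (n + y < m)%N by have := ltn_ord y; lia.
pose f y := Ordinal (shift_lt y).
apply: (@odd_perm_transports _ _ f).
  by move=> y z [] /eqP; rewrite eqn_add2l => /eqP e; apply: val_inj.
split=> [y|x x_out]; apply: val_inj; rewrite /= -!pnatE pnat_shift_perm //=.
  by rewrite addKn ltnNge leq_addr /= shift_lt.
case: ifP => // x_n; case: ifP => // xm.
have xn_lt : (x - n < m - n)%N by lia.
by case/codomP: x_out; exists (Ordinal xn_lt); apply: val_inj => /=; lia.
Qed.

Lemma odd_beta_perm n m : (n <= m)%N -> odd_perm (beta_perm n m) = odd (m - n).
Proof.
elim: m => [|m IH] nm.
  by rewrite (_ : n = 0%N) ?beta_perm1 ?odd_perm1 //; lia.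
case: (ltnP m n) => mn.
  by rewrite (_ : n = m.+1) ?beta_perm1 ?odd_perm1 ?subnn //; lia.
have inord_m : nat_of_ord (inord m : 'I_m.+2) = m by apply: inordK.
have -> : beta_perm n m.+1 =
          (ext_perm m.+1 m.+2 (beta_perm n m) * tperm (inord m) ord_max)%g.
  apply: eq_perm_pnat => x xm.
  have b_lt : (pnat (beta_perm n m) x < m.+2)%N by rewrite pnat_beta_perm //; case_ifs; lia.
  rewrite pnatM pnat_ext_perm // pnat_tperm // !pnat_beta_perm // /= inord_m.
  by case_ifs; lia.
rewrite odd_permM odd_ext_perm // IH // odd_tperm subSn //=.
suff -> : inord m != ord_max :> 'I_m.+2 by rewrite addbT.
by rewrite -(inj_eq val_inj) /= inord_m; lia.
Qed.

Lemma hat_ext m (p q : hat m) : p.1 = q.1 -> p.2 = q.2 -> p = q.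
Proof. by case: p q => [? ?] [? ?] /= -> ->. Qed.

Lemma inHat_le1 m (p : hat m) : inHat p -> (m <= 1)%N -> p.2 = 0%R.
Proof. by rewrite /inHat; case: ifP => [m1 _ ?|_ /eqP //]; lia. Qed.

Lemma inHat_odd m (p : hat m) : inHat p -> odd_perm p.1 = odd `|p.2|%N.
Proof.
move=> hp; case: (leqP m 1) => m1; last by move: hp; rewrite /inHat m1 => /eqP.
by rewrite (inHat_le1 hp m1) (perm_le1 p.1 m1) odd_perm1.
Qed.

Lemma inHatP m (p : hat m) :
  odd_perm p.1 = odd `|p.2|%N -> ((m <= 1)%N -> p.2 = 0%R) -> inHat p.
Proof.
rewrite /inHat; case: ifP => [_ /eqP // | m1 _ p2].
by apply/eqP/p2; rewrite leqNgt m1.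
Qed.

Lemma odd_absz_add (a b : int) : odd `|(a + b)%R|%N = odd `|a|%N (+) odd `|b|%N.
Proof.
by case: (odd `|a|%N) / idP; case: (odd `|b|%N) / idP;
   case: (odd `|(a + b)%R|%N) / idP => /=; lia.
Qed.

Lemma inHat_hmul m (p q : hat m) : inHat p -> inHat q -> inHat (hmul p q).
Proof.
move=> hp hq; apply: inHatP => /= [|m1].
  by rewrite odd_permM odd_absz_add (inHat_odd hp) (inHat_odd hq) addbC.
by rewrite (inHat_le1 hp m1) (inHat_le1 hq m1).
Qed.

Lemma inHat_i1 m k (s : hat m) : (m <= k)%N -> inHat s -> inHat (i1 m k s).
Proof.
move=> mk hs; apply: inHatP => /= [|k1]; first by rewrite odd_ext_perm // inHat_odd.
by apply: inHat_le1; last lia.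
Qed.

Lemma inHat_i2 n m (u : hat (m - n)) : (n <= m)%N -> inHat u -> inHat (i2 n m u).
Proof.
move=> nm hu; apply: inHatP => /= [|m1]; first by rewrite odd_shift_perm // inHat_odd.
by apply: inHat_le1; last lia.
Qed.

Lemma inHat_beta n m : (n <= m)%N -> inHat (beta n m).
Proof.
move=> nm; apply: inHatP => /= [|m1]; first by rewrite odd_beta_perm.
by rewrite (_ : (m - n)%N = 0%N) //; lia.
Qed.

Lemma inHat_plus1 n m (s : hat m) : (n <= m)%N -> inHat s -> inHat (plus1 n m s).
Proof. by move=> nm hs; apply: inHat_hmul; [apply: inHat_i1 | apply: inHat_beta]. Qed.

Lemma plus1_hmul_i2 n m (s : hat m) (u : hat (m - n)) : (n <= m)%N ->
  plus1 n m (hmul s (i2 n m u)) = hmul (plus1 n m s) (i2 n.+1 m.+1 u).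
Proof.
move=> nm; apply: hat_ext => /=; last by rewrite -!addrA (addrC u.2).
apply: eq_perm_pnat => x _.
rewrite !pnatM !pnat_ext_perm // pnatM !pnat_beta_perm // !pnat_shift_perm //.
have shiftE y : @pnat (m.+1 - n.+1) u.1 (y - n.+1) = @pnat (m - n) u.1 (y.-1 - n).
  by congr pnat; lia.
rewrite shiftE; congr pnat; case_ifs; generalize_pnat; intros; lia.
Qed.

Lemma plus1_hmul_i1 n m k (s : hat m) (t : hat k) : (n <= m)%N -> (m <= k)%N ->
  hmul (plus1 m k t) (i1 m.+1 k.+1 (plus1 n m s)) = plus1 n k (hmul t (i1 m k s)).
Proof.
move=> nm mk; apply: hat_ext => /=; last by lia.
apply: eq_perm_pnat => x _.
rewrite !pnatM !pnat_ext_perm // !pnatM !pnat_ext_perm //; try lia.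
congr pnat; rewrite !pnat_beta_perm //; try lia.
case_ifs; generalize_pnat; intros; lia.
Qed.

Definition hat_ker (N : nat) (j : int) : hat N := (1%g, (2 * j)%R).

Lemma hone_hat_ker N : hone N = hat_ker N 0.
Proof. by rewrite /hat_ker mulr0. Qed.

Lemma inHat_hat_ker N (j : int) : (1 < N)%N || (j == 0) -> inHat (hat_ker N j).
Proof. by move=> N_j; apply: inHatP => /=; rewrite ?odd_perm1; lia. Qed.

Lemma plus1_hat_ker N j : plus1 N N (hat_ker N j) = hat_ker N.+1 j.
Proof.
apply: hat_ext => /=; first by rewrite beta_perm1 ext_perm1 // mulg1.
by rewrite subnn addr0.
Qed.

Lemma hat_ker_central n N (s : hat N) j : (n <= N)%N ->
  hmul (hat_ker N j) (i1 N N s) = hmul s (i2 n N (hat_ker (N - n) j)).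
Proof.
move=> nN; apply: hat_ext => /=; last exact: addrC.
by rewrite ext_perm_id mulg1 shift_perm1 // mul1g.
Qed.

Lemma hat_ker_of_same_perm m (p q : hat m) : inHat p -> inHat q -> p.1 = q.1 ->
  exists2 j, inHat (hat_ker m j) & q.2 = (2 * j + p.2)%R.
Proof.
move=> hp hq pq; case: (leqP m 1) => m1.
  exists 0%R; first by apply: inHat_hat_ker; rewrite eqxx orbT.
  by rewrite (inHat_le1 hp m1) (inHat_le1 hq m1).
exists ((q.2 - p.2) %/ 2)%Z; first by apply: inHat_hat_ker; rewrite m1.
by move: (inHat_odd hp) (inHat_odd hq); rewrite pq; case: (odd_perm q.1); lia.
Qed.

Lemma Sigma_FIhatModule (M : FIhatData) : isFIhatModule M -> isFIhatModule (Sigma M).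
Proof.
case=> [Mcos [Mid Mcomp]]; split; [|split].
- move=> n m s u nm hs hu x /=; rewrite plus1_hmul_i2 //.
  by apply: Mcos => //; apply: inHat_plus1.
- by move=> n x /=; rewrite hone_hat_ker plus1_hat_ker -hone_hat_ker Mid.
- move=> n m k s t nm mk hs ht x /=.
  by rewrite Mcomp ?inHat_plus1 // plus1_hmul_i1.
Qed.

Lemma iter_Sigma_FIhatModule (M : FIhatData) j :
  isFIhatModule M -> isFIhatModule (iter j Sigma M).
Proof. by move=> hM; elim: j => //= j; apply: Sigma_FIhatModule. Qed.

Definition ker_trivial_from (M : FIhatData) (c : nat) : Prop :=
  forall (N : nat) (j : int) (x : Mob M N), (c <= N)%N -> Mmap M N N (hat_ker N j) x = x.

Lemma Sigma_ker_trivial (M : FIhatData) c :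
  ker_trivial_from M c.+1 -> ker_trivial_from (Sigma M) c.
Proof. by move=> Mker N j x cN /=; rewrite plus1_hat_ker Mker. Qed.

Lemma iter_Sigma_ker_trivial (M : FIhatData) j c :
  ker_trivial_from M (j + c) -> ker_trivial_from (iter j Sigma M) c.
Proof.
elim: j c => [|j IH] c Mker //=.
by apply/Sigma_ker_trivial/IH; rewrite addnS.
Qed.

Lemma ker_trivial_of_genDegLe (M : FIhatData) a :
  isFIhatModule M -> genDegLe M a -> ker_trivial_from M (a + 2).
Proof.
case=> [Mcos [_ Mcomp]] [W [_ [phi [W0 [_ [_ [_ Mgen]]]]]]] N j x aN.
have [l [l_ok ->]] := Mgen N x.
rewrite raddf_sum; apply: eq_big_seq => -[n [s w]] /(allP l_ok) /andP [/= nN hs].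
case: (ltnP a n) => [an | na]; first by rewrite (W0 n an w) !raddf0.
have ker_in k : (1 < k)%N -> inHat (hat_ker k j).
  by move=> k1; apply: inHat_hat_ker; rewrite k1.
rewrite Mcomp ?ker_in //; last by lia.
by rewrite (hat_ker_central _ _ nN) Mcos // ker_in //; lia.
Qed.

Lemma factorsThroughFI_of_ker_trivial (M : FIhatData) :
  isFIhatModule M -> ker_trivial_from M 0 -> factorsThroughFI M.
Proof.
case=> [Mcos [_ Mcomp]] Mker n m s t nm hs ht st x.
have [u1 u1E] : exists u1 : 'S_(m - n), shift_perm n m u1 = (t.1 * s.1^-1)%g.
  by apply: shift_perm_of_fixed_prefix => // i i_n; rewrite permM -st // permK.
pose u : hat (m - n) := (u1, Posz (odd_perm u1)).
have hu : inHat u.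
  by apply: inHatP => /= [|m1]; rewrite ?oddb // (perm_le1 u1 m1) odd_perm1.
have hv : inHat (hmul s (i2 n m u)) by apply: inHat_hmul; last exact: inHat_i2.
have [j hj t2] := hat_ker_of_same_perm hv ht (etrans (congr1 _ u1E) (mulgKV _ _)).
have -> : t = hmul (hat_ker m j) (i1 m m (hmul s (i2 n m u))).
  by apply: hat_ext; [rewrite /= ext_perm_id mulg1 u1E mulgKV | rewrite t2].
by rewrite -Mcomp // Mker // Mcos.
Qed.

Theorem mainTheorem10 (M : FIhatData) (a : nat) :
  isFIhatModule M -> genDegLe M a -> isFImodule (iter (a + 2) Sigma M).
Proof.
move=> hM hgen; split; first exact: iter_Sigma_FIhatModule.
apply: factorsThroughFI_of_ker_trivial; first exact: iter_Sigma_FIhatModule.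
by apply: iter_Sigma_ker_trivial; rewrite addn0; apply: ker_trivial_of_genDegLe.
Qed.
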